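(* Assume (A1)–(A3) with functions $\xi_1,\xi_2$ and let $x_0>1$ with $\Phi(x_0)<\infty$. Then the mapping $f:\Theta\times\mathbb R\to\mathbb R$, $f(\theta,x)=\mathbb E[\Phi^*(G(\theta,Z_1)+x)-x]$, is lower semicontinuous, and its set of minimizers $S(f)$ is nonempty, compact, and contained in $\Theta\times[x_l,x_u]$ with $x_l=-\Phi(0)-1-\mathbb E[\xi_2(Z_1)]$ and $x_u=\frac{\Phi(x_0)+1+x_0+\mathbb E[\xi_2(Z_1)]+x_0\mathbb E[\xi_1(Z_1)]}{x_0-1}$.
   Context: $\Theta\subseteq\mathbb R^m$ nonempty compact; $Z_1$ an $\mathbb R^d$-valued random vector with law $\mathbb P^Z$; $G:\Theta\times\mathbb R^d\to\mathbb R$; $\Phi:[0,\infty[\to[0,\infty]$ lower semicontinuous convex, $\Phi(0)<\infty$, $\Phi(x_0)<\infty$ for some $x_0>1$, $\inf\Phi=0$, $\Phi(x)/x\to\infty$; $\Phi^*(y)=\sup_{x\ge0}(xy-\Phi(x))$; $H^{\Phi^*}=\{X:\mathbb E[\Phi^*(c|X|)]<\infty\ \forall c>0\}$. (A1) $G$ is $\mathcal B(\Theta)\otimes\mathcal B(\mathbb R^d)$-measurable and $G(\cdot,z)$ lower semicontinuous. (A2) $\sup_\theta|G(\theta,z)|\le\xi_1(z)$, $\xi_1$ $\mathbb P^Z$-integrable. (A3) $G(\theta,Z_1)\in H^{\Phi^*}$ for all $\theta$, and $\sup_\theta|\Phi^*(G(\theta,z))|\le\xi_2(z)$, $\xi_2$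 $\mathbb P^Z$-integrable. *)

From HB Require Import structures.
From mathcomp Require Import all_boot all_order all_algebra.
From mathcomp Require Import all_classical all_reals all_analysis.
Set Implicit Arguments. Unset Strict Implicit. Unset Printing Implicit Defensive.
Import Order.TTheory GRing.Theory Num.Theory.
Import numFieldNormedType.Exports.
Local Open Scope classical_set_scope.
Local Open Scope ring_scope.

Definition borelRV (R : realType) (n : nat) :=
  g_sigma_algebraType (@open 'rV[R]_n).

Definition lsc_on {X : topologicalType} {R : realType}
  (D : set X) (f : X -> \bar R) : Prop :=
  forall p, D p -> forall a : R, (a%:E < f p)%E ->
    \forall q \near within D (nbhs p), (a%:E < f q)%E.

Definition conj_fun {R : realType} (Phi : R -> \bar R) (y : R) : \bar R :=
  ereal_sup [set ((x * y)%:E - Phi x)%E | x in `[0, +oo[%classic].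

Definition convex_on_nonneg {R : realType} (Phi : R -> \bar R) : Prop :=
  forall x y t : R, 0 <= x -> 0 <= y -> (0 < t < 1)%R ->
    (Phi (t * x + (1 - t) * y)%R <= t%:E * Phi x + (1 - t)%R%:E * Phi y)%E.

Definition fobj {R : realType} {dO} {Omega : measurableType dO}
  (P : probability Omega R) (m d : nat)
  (Phi : R -> \bar R) (G : 'rV[R]_m -> 'rV[R]_d -> R)
  (Z : Omega -> 'rV[R]_d) (p : 'rV[R]_m * R) : \bar R :=
  (\int[P]_w (conj_fun Phi (G p.1 (Z w) + p.2) - p.2%:E))%E.

Definition minimizers {T : Type} {R : realType} (D : set T) (f : T -> \bar R)
  : set T :=
  [set p | D p /\ forall q, D q -> (f p <= f q)%E].

(* Write Phi^*(y) = sup_{t >= 0} (t y - Phi t).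
   - Superlinear growth of Phi makes Phi^* finite; Phi^* is nondecreasing and
     each slope t gives the affine minorant t y - Phi(t).  With the slopes 0 and
     x0 this yields f(theta, x) >= -Phi(0) - x and
     f(theta, x) >= (x0 - 1) x - Phi(x0) - x0 E[xi1(Z)], while (A3) gives
     f(theta, 0) <= E[xi2(Z)].  Hence f > f(theta, 0) outside [xl, xu].
   - The integrand is lower semicontinuous in (theta, x) (G is lsc in theta and
     Phi^* is a supremum of nondecreasing affine maps) and locally uniformly
     bounded below, so a parametric Fatou lemma makes f lower semicontinuous.
   - A lsc function attains its minimum on the compact band Theta x [xl, xu];
     this is a global minimizer, all minimizers lie in the band, and they form
     a closed sublevel set of the band, hence a compact set. *)

From HB Require Import structures.
From mathcomp Require Import all_boot all_order all_algebra.
From mathcomp Require Import all_classical all_reals all_analysis.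
From mathcomp Require Import measurable_realfun.
From mathcomp Require Import lra.
Import Order.TTheory GRing.Theory Num.Theory.
Import numFieldNormedType.Exports.
Local Open Scope classical_set_scope.
Local Open Scope ring_scope.

Section ConvexConjugate.
Context {R : realType} (Phi : R -> \bar R).
Hypothesis Phi_ge0 : forall x : R, 0 <= x -> (0 <= Phi x)%E.
Hypothesis Phi0_fin : (Phi 0%R < +oo)%E.
Hypothesis Phi_superlinear : (fun x : R => Phi x * (x^-1)%R%:E)%E @ +oo --> +oo%E.
Local Open Scope ereal_scope.

Lemma conj_fun_ge (t y : R) : (0 <= t)%R -> (t * y)%:E - Phi t <= conj_fun Phi y.
Proof.
by move=> t0; apply: ereal_sup_ubound; exists t => //; rewrite /= in_itv /= t0.
Qed.

(* Phi^* is nondecreasing, since only slopes t >= 0 occur in the supremum. *)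
Lemma conj_fun_nondecreasing (y z : R) : (y <= z)%R -> conj_fun Phi y <= conj_fun Phi z.
Proof.
move=> yz; apply: ge_ereal_sup => _ [t /= t0 <-].
rewrite in_itv /= andbT in t0; apply: le_trans (conj_fun_ge t z t0).
by rewrite leeB // lee_fin ler_wpM2l.
Qed.

(* Superlinear growth of Phi makes Phi^* finite: beyond the point M where
   Phi(t) >= |y| t, the affine minorants are nonpositive. *)
Lemma conj_fun_lt_pinfty (y : R) : conj_fun Phi y < +oo.
Proof.
move/cvgeyPge : Phi_superlinear => /(_ `|y|%R) [M [_ HM]].
suff : conj_fun Phi y <= ((`|M| + 1) * `|y|)%:E by move/le_lt_trans; apply; exact: ltry.
apply: ge_ereal_sup => _ [t /= t0 <-]; rewrite in_itv /= andbT in t0.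
have ty : (t * y <= t * `|y|)%R by rewrite ler_wpM2l // ler_norm.
have [tM|Mt] := leP t (`|M| + 1)%R.
  have := Phi_ge0 _ t0; case: (Phi t) => [r||] //= r0; last by rewrite leNye.
  rewrite lee_fin; have : (t * `|y| <= (`|M| + 1) * `|y|)%R by rewrite ler_wpM2r.
  by rewrite lee_fin in r0; lra.
have tpos : (0 < t)%R by have := normr_ge0 M; lra.
have := Phi_ge0 _ t0; have := HM t; have := ler_norm M.
case: (Phi t) => [r||] //= ? /(_ ltac:(lra)).
- rewrite -EFinM lee_fin ler_pdivlMr // mulrC => hr _; rewrite -EFinB lee_fin.
  by have := mulr_ge0 (addr_ge0 (normr_ge0 M) ler01) (normr_ge0 y); lra.
- by rewrite addeNy leNye.
Qed.

(* The slope t = 0 gives Phi^* >= -Phi(0) > -oo. *)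
Lemma conj_fun_fin_num (y : R) : conj_fun Phi y \is a fin_num.
Proof.
rewrite fin_numE (lt_eqF (conj_fun_lt_pinfty y)) andbT.
apply/negP => /eqP h; have := conj_fun_ge 0 y (lexx 0%R); rewrite h leeNy_eq.
by have := Phi_ge0 _ (lexx 0%R); move: Phi0_fin; case: (Phi 0%R).
Qed.

Local Close Scope ereal_scope.

Definition conjr (y : R) : R := fine (conj_fun Phi y).

Lemma conjrE (y : R) : (conjr y)%:E = conj_fun Phi y.
Proof. by rewrite fineK // conj_fun_fin_num. Qed.

Lemma conjr_nondecreasing : {homo conjr : y z / y <= z}.
Proof. by move=> y z yz; rewrite -lee_fin !conjrE conj_fun_nondecreasing. Qed.

Lemma measurable_conjr : measurable_fun setT conjr.
Proof. exact: nondecreasing_measurable conjr_nondecreasing. Qed.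

Lemma conjr_ge (t y : R) : 0 <= t -> (Phi t < +oo)%E -> t * y - fine (Phi t) <= conjr y.
Proof.
move=> t0 Phit; rewrite -lee_fin conjrE EFinB fineK ?conj_fun_ge //.
by rewrite ge0_fin_numE // Phi_ge0.
Qed.

(* Phi^*(u + v) <= max(Phi^*(2|u|), Phi^*(2|v|)), and Phi^* >= -Phi(0). *)
Lemma conjr_add_le (u v : R) :
  conjr (u + v) <= conjr (2 * `|u|) + conjr (2 * `|v|) + fine (Phi 0).
Proof.
have lb z : - fine (Phi 0) <= conjr z.
  by have := conjr_ge 0 z (lexx 0) Phi0_fin; rewrite mul0r sub0r.
have := lb (2 * `|u|); have := lb (2 * `|v|).
have := ler_norm u; have := ler_norm v => nv nu.
have [uv|vu] := leP `|u| `|v|.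
- have : conjr (u + v) <= conjr (2 * `|v|) by apply: conjr_nondecreasing; lra.
  lra.
- have : conjr (u + v) <= conjr (2 * `|u|) by apply: conjr_nondecreasing; lra.
  lra.
Qed.

End ConvexConjugate.

Section BoundedBelowIntegrable.
Context {d} {T : measurableType d} {R : realType} (P : probability T R).
Local Open Scope ereal_scope.

Lemma integral_cst_prob (r : R) : \int[P]_w r%:E = r%:E.
Proof.
by have := integral_cst P measurableT r%:E; rewrite [X in _ * X]probability_setT mule1.
Qed.

Lemma integrable_addr_cst (f : T -> R) (c : R) : P.-integrable setT (EFin \o f) ->
  P.-integrable setT (EFin \o (fun w => f w + c)%R).
Proof.
move=> fi; apply: (eq_integrable _ ((EFin \o f) \+ (EFin \o cst c))%E) => //.
by apply: integrableD => //; exact: finite_measure_integrable_cst.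
Qed.

Lemma integral_addr_cst (f : T -> R) (c : R) : P.-integrable setT (EFin \o f) ->
  \int[P]_w (f w + c)%:E = \int[P]_w (f w)%:E + c%:E.
Proof.
move=> fi; rewrite (eq_integral (fun w => (EFin \o f) w + (EFin \o cst c) w)).
  by rewrite integralD_EFin ?integral_cst_prob //; exact: finite_measure_integrable_cst.
by move=> w _; rewrite EFinD.
Qed.

(* A measurable g >= -c whose integral is not +oo is integrable: the negative
   part of g is bounded by |c|, hence so is its integral, and then the finite
   integral of g bounds that of the positive part. *)
Lemma integrable_bounded_below (g : T -> R) (c : R) : measurable_fun setT g ->
  (forall w, - c <= g w)%R -> \int[P]_w (g w)%:E < +oo ->
  P.-integrable setT (EFin \o g).
Proof.
move=> mg gc gi; have mG : measurable_fun setT (EFin \o g) by exact/measurable_EFinP.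
have gc' w : (- `|c| <= g w)%R by have := gc w; have := ler_norm c; lra.
have neg_le : \int[P]_w (EFin \o g)^\- w <= `|c|%:E.
  rewrite -integral_cst_prob; apply: ge0_le_integral => //.
  - exact: measurable_funeneg.
  - by move=> w _; rewrite funenegE /= ge_max !lee_fin normr_ge0 andbT; have := gc' w; lra.
have neg_fin : \int[P]_w (EFin \o g)^\- w \is a fin_num.
  by rewrite ge0_fin_numE ?(le_lt_trans neg_le (ltry _)) // integral_ge0.
have pos_lt : \int[P]_w (EFin \o g)^\+ w < +oo.
  rewrite ltey; apply/negP => /eqP pos_oo; move: gi.
  rewrite integralE pos_oo addye ?ltxx //.
  by move: neg_fin; rewrite -fin_numN => /fin_numP[].
apply/integrableP; split => //.
apply: le_lt_trans (_ : \int[P]_w ((EFin \o g)^\+ w + `|c|%:E) < +oo).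
  apply: ge0_le_integral => //.
  - exact: measurableT_comp.
  - by apply: emeasurable_funD => //; exact: measurable_funepos.
  - move=> w _; rewrite funeposE /= /maxe lte_fin.
    have := gc' w; have := normr_ge0 c.
    case: ifP => gw; rewrite -EFinD lee_fin.
    + by rewrite (ltr0_norm gw); lra.
    + by rewrite (@ger0_norm _ (g w)) ?lerDl // leNgt gw.
rewrite ge0_integralD //; last exact: measurable_funepos.
by rewrite integral_cst_prob lte_add_pinfty // ltry.
Qed.

End BoundedBelowIntegrable.

Section LowerSemicontinuity.
Context {X : topologicalType} {R : realType}.
Local Open Scope ereal_scope.

Lemma lsc_on_subset {D K : set X} {f : X -> \bar R} :
  K `<=` D -> lsc_on D f -> lsc_on K f.
Proof.
move=> KD lscf p Kp a afp; have := lscf p (KD p Kp) a afp.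
by rewrite !near_withinE; apply: filterS => q Dq /KD.
Qed.

Lemma eq_lsc_on {D : set X} {f g : X -> \bar R} :
  (forall p, D p -> f p = g p) -> lsc_on D f -> lsc_on D g.
Proof.
move=> fg lscf p Dp a; rewrite -fg // => /(lscf p Dp); rewrite !near_withinE.
by apply: filterS => q + Dq; rewrite -fg //; apply.
Qed.

Lemma lsc_on_continuous (D : set X) (k : X -> R) :
  (forall p, D p -> {for p, continuous k}) -> lsc_on D (EFin \o k).
Proof.
move=> ck p Dp a; rewrite lte_fin => akp; rewrite near_withinE.
by apply: filterS (cvgr_gt _ (ck p Dp) _ akp) => q + _; rewrite lte_fin.
Qed.

Lemma lsc_onD {D : set X} {g h : X -> R} :
  lsc_on D (EFin \o g) -> lsc_on D (EFin \o h) -> lsc_on D (EFin \o (g \+ h)%R).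
Proof.
move=> lscg lsch p Dp a; rewrite lte_fin /= => aghp.
pose e := ((g p + h p - a) / 2)%R.
have gp : ((g p - e)%R%:E < (EFin \o g) p) by rewrite lte_fin /e; lra.
have hp : ((h p - e)%R%:E < (EFin \o h) p) by rewrite lte_fin /e; lra.
apply: filterS2 (lscg p Dp _ gp) (lsch p Dp _ hp) => q /=; rewrite !lte_fin /e.
lra.
Qed.

Lemma lsc_on_fst {Y : topologicalType} {A : set X} {B : set Y} {g : X -> \bar R} :
  lsc_on A g -> lsc_on (A `*` B) (g \o fst).
Proof.
move=> lscg p [Ap _] a agp; have := lscg p.1 Ap a agp; rewrite !near_withinE => H.
exists ([set q | A q -> a%:E < g q], setT); first by split; [exact: H | exact: filterT].
by move=> [q1 q2] /= [Hq _] [Aq _]; exact: Hq.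
Qed.

(* Phi^* o g is lower semicontinuous when g is: Phi^* is a supremum of the
   nondecreasing affine maps y |-> t y - Phi(t), t >= 0. *)
Lemma lsc_on_conj_fun (Phi : R -> \bar R) {D : set X} {g : X -> R} :
  lsc_on D (EFin \o g) -> lsc_on D (conj_fun Phi \o g).
Proof.
move=> lscg p Dp b /= /ereal_sup_gt [_ [t /= t0 <-]] bt.
rewrite in_itv /= andbT in t0.
suff : \forall q \near within D (nbhs p), b%:E < (t * g q)%:E - Phi t.
  by apply: filterS => q /lt_le_trans; apply; exact: conj_fun_ge.
move: bt; case: (Phi t) => [r||] bt; last 2 first.
- by move: bt; rewrite addeNy.
- by apply: nearW => q; rewrite /= addey // ltry.
move: bt; have [->|tneq0] := eqVneq t 0%R => bt.
  by apply: nearW => q; move: bt; rewrite !mul0r.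
have tpos : (0 < t)%R by rewrite lt_neqAle eq_sym tneq0.
have := lscg p Dp ((b + r) / t)%R _; rewrite lte_fin ltr_pdivrMr // mulrC.
move: bt; rewrite -EFinB lte_fin => bt /(_ ltac:(lra)).
apply: filterS => q; rewrite /= -EFinB !lte_fin ltr_pdivrMr // mulrC; lra.
Qed.

Lemma lsc_sublevel_closed {D : set X} {f : X -> \bar R} (a : R) :
  closed D -> lsc_on D f -> closed [set p | D p /\ f p <= a%:E].
Proof.
move=> Dcl lscf q clq; have Dq : D q.
  by apply: Dcl => B /clq [r [[Dr _] Br]]; exists r.
split => //; rewrite leNgt; apply/negP => aq.
have := lscf q Dq a aq; rewrite near_withinE => /clq [r [[Dr fra] Hr]].
by have := Hr Dr; rewrite ltNge fra.
Qed.

(* A cluster point of the filter of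
   sublevel sets {f <= b}, b > inf f, is a minimizer. *)
Lemma lsc_compact_argmin {K : set X} {f : X -> \bar R} :
  compact K -> lsc_on K f -> ereal_inf (f @` K) \is a fin_num ->
  exists2 p, K p & forall q, K q -> f p <= f q.
Proof.
move=> Kc lscf; set mi := ereal_inf _ => /fineK miE; set m := fine mi in miE.
pose B (b : R) := [set q | K q /\ f q <= b%:E].
pose F := filter_from [set b : R | (m < b)%R] B.
have FF : Filter F.
  apply: filter_from_filter; first by exists (m + 1)%R => /=; lra.
  move=> b1 b2 b1m b2m; exists (Num.min b1 b2); first by rewrite /= lt_min b1m b2m.
  move=> q [Kq fq]; split; split => //; apply: le_trans fq _.
  - by rewrite lee_fin ge_min lexx.
  - by rewrite lee_fin ge_min lexx orbT.
have PF : ProperFilter F.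
  apply: filter_from_proper => b /= mb.
  have /ereal_inf_lt[_ [q Kq <-] fqb] : mi < b%:E by rewrite -miE lte_fin.
  by exists q; split => //; exact: ltW.
have [p [Kp clp]] : K `&` cluster F !=set0.
  by apply: Kc; exists (m + 1)%R => [/=|q []//]; lra.
exists p => // q Kq.
suff fp_mi : f p <= mi by apply: le_trans fp_mi _; apply: ereal_inf_lbound; exists q.
rewrite -miE leNgt; apply/negP => mfp.
have [b mb bfp] : exists2 b : R, (m < b)%R & b%:E < f p.
  move: mfp; case: (f p) => [r||] // mr.
  - by exists ((m + r) / 2)%R; rewrite ?lte_fin; move: mr; rewrite lte_fin; lra.
  - by exists (m + 1)%R; [lra | exact: ltry].
have := lscf p Kp b bfp; rewrite near_withinE => /(clp (B b)) [|r [[Kr frb]]].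
  by exists b.
by move=> /(_ Kr); rewrite ltNge frb.
Qed.

End LowerSemicontinuity.

Section SequentialLsc.
Context {R : realType} {X : pseudoMetricType R}.

Lemma not_near_within_seq (D : set X) (p : X) (Q : X -> Prop) :
  ~ (\forall q \near within D (nbhs p), Q q) ->
  exists u : nat -> X, [/\ forall n, D (u n), forall n, ~ Q (u n) & u @ \oo --> p].
Proof.
move=> nQ; have /choice[u uP] : forall n, exists q, [/\ ball p n.+1%:R^-1 q, D q & ~ Q q].
  move=> n; apply: contrapT => hno; apply: nQ; rewrite near_withinE.
  apply: filterS (nbhsx_ballx p n.+1%:R^-1 _) => // q bq Dq.
  by apply: contrapT => nq; apply: hno; exists q.
exists u; split => [n|n|]; [by have [] := uP n|by have [] := uP n|].
apply/cvg_ballP => e e0; apply: filterS (near_infty_natSinv_lt (PosNum e0)) => n ne.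
by have [+ _ _] := uP n; apply: le_ball; exact: ltW.
Qed.

Lemma near_within_seq (D : set X) (p : X) (u : nat -> X) (Q : X -> Prop) :
  (forall n, D (u n)) -> u @ \oo --> p ->
  (\forall q \near within D (nbhs p), Q q) -> \forall n \near \oo, Q (u n).
Proof.
move=> Du up; rewrite near_withinE => /up Hu.
have {}Hu : \forall n \near \oo, D (u n) -> Q (u n) := Hu.
by apply: filterS Hu => n; apply.
Qed.

End SequentialLsc.

Section LscIntegral.
Context {d} {T : measurableType d} {R : realType} (P : probability T R).
Local Open Scope ereal_scope.

Lemma limn_einf_ge (v : nat -> R) (x : R) :
  (forall b, (b < x)%R -> \forall n \near \oo, (b < v n)%R) ->
  x%:E <= limn_einf (fun n => (v n)%:E).
Proof.
move=> vx; apply/lee_addgt0Pr => e e0.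
suff : (x - e)%:E <= limn_einf (fun n => (v n)%:E) by rewrite EFinB leeBlDr.
rewrite limn_einf_lim; apply: lime_ge; first exact: is_cvg_einfs.
have [N _ vN] : \forall n \near \oo, (x - e < v n)%R by apply: vx; lra.
exists N => // n /= Nn; apply/ereal_infP => _ [k /= nk <-].
by rewrite lee_fin ltW //; apply: vN; exact: leq_trans nk.
Qed.

Lemma limn_einf_le (v : (\bar R)^nat) (y : \bar R) :
  (\forall n \near \oo, v n <= y) -> limn_einf v <= y.
Proof.
move=> vy; rewrite limn_einf_lim; apply: lime_le; first exact: is_cvg_einfs.
by apply: filterS vy => n; apply: le_trans; apply: ereal_inf_lbound; exists n => /=.
Qed.

(* Fatou's lemma in parametric form: integrals of a family of integrable
   functions, lower semicontinuous in the parameter and locally uniformly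
   bounded below, depend lower semicontinuously on the parameter. *)
Lemma lsc_on_integral {X : pseudoMetricType R} (D : set X) (F : X -> T -> R) :
  (forall q, D q -> P.-integrable setT (EFin \o F q)) ->
  (forall p, D p -> exists c : R,
     \forall q \near within D (nbhs p), forall w, (- c <= F q w)%R) ->
  (forall w, lsc_on D (fun q => (F q w)%:E)) ->
  lsc_on D (fun q => \int[P]_w (F q w)%:E).
Proof.
move=> iF lbF lscF p Dp a aFp; have [c lbc] := lbF p Dp; apply: contrapT => nfar.
have [u [Du /(_ _) /not_implyP Fu up]] : exists u : nat -> X, [/\ forall n, D (u n),
    forall n, ~ ((forall w, (- c <= F (u n) w)%R) -> a%:E < \int[P]_w (F (u n) w)%:E)
    & u @ \oo --> p].
  apply: (@not_near_within_seq _ _ D p (fun q =>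
    (forall w, (- c <= F q w)%R) -> a%:E < \int[P]_w (F q w)%:E)) => far.
  apply: nfar.
  by apply: filterS2 lbc far => q lbq /(_ lbq).
pose g n w := (F (u n) w + c)%:E.
have mF q : D q -> measurable_fun setT (F q).
  by move=> Dq; have /integrableP[/measurable_EFinP] := iF _ Dq.
have mg n : measurable_fun setT (g n) by apply/measurable_EFinP/measurable_funD => //; exact: mF.
have lbp w : (- c <= F p w)%R by move: lbc; rewrite near_withinE => /nbhs_singleton /(_ Dp).
have g0 n w : 0 <= g n w by rewrite lee_fin; have [lb _] := Fu n; have := lb w; lra.
have Fp_le : \int[P]_w (F p w + c)%:E <= \int[P]_w limn_einf (g ^~ w).
  apply: ge0_le_integral => //.
  - by move=> w _; rewrite lee_fin; have := lbp w; lra.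
  - by apply/measurable_EFinP/measurable_funD => //; exact: mF.
  - apply: measurableT_comp => //; apply: measurable_fun_limn_esup => n.
    exact: measurableT_comp.
  - move=> w _; apply: limn_einf_ge => b bFp.
    have := lscF w p Dp (b - c)%R _; rewrite lte_fin => /(_ ltac:(lra)).
    by move/(near_within_seq _ _ _ _ Du up); apply: filterS => n; rewrite lte_fin; lra.
have int_le : limn_einf (fun n => \int[P]_w g n w) <= (a + c)%:E.
  apply: limn_einf_le; apply: nearW => n; rewrite /g integral_addr_cst ?iF //.
  by have [_ /negP] := Fu n; rewrite -leNgt EFinD => Fa; rewrite leeD2rE.
have Fpa : \int[P]_w (F p w)%:E + c%:E <= a%:E + c%:E.
  rewrite -integral_addr_cst ?iF // -EFinD.
  exact: le_trans (le_trans Fp_le (fatou P measurableT mg (fun n w _ => g0 n w))) int_le.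
by move: aFp; rewrite ltNge -(@leeD2rE _ c%:E) // Fpa.
Qed.

End LscIntegral.

Section Objective.
Context (R : realType) (m d : nat) (Theta : set 'rV[R]_m)
  (dO : measure_display) (Omega : measurableType dO)
  (P : probability Omega R) (Z : {mfun Omega >-> borelRV R d})
  (G : 'rV[R]_m -> 'rV[R]_d -> R) (Phi : R -> \bar R)
  (xi1 xi2 : 'rV[R]_d -> R) (x0 : R).
Hypothesis Theta_neq0 : Theta !=set0.
Hypothesis Theta_compact : compact Theta.
Hypothesis Phi_ge0 : forall x : R, 0 <= x -> (0 <= Phi x)%E.
Hypothesis Phi0_fin : (Phi 0%R < +oo)%E.
Hypothesis Phi_superlinear : (fun x : R => Phi x * (x^-1)%R%:E)%E @ +oo --> +oo%E.
Hypothesis x0_gt1 : 1 < x0.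
Hypothesis Phix0_fin : (Phi x0 < +oo)%E.
Hypothesis G_measurable :
  measurable_fun (Theta `*` setT : set (borelRV R m * borelRV R d))
    (fun p : borelRV R m * borelRV R d => G p.1 p.2).
Hypothesis G_lsc : forall z, lsc_on Theta (fun th => (G th z)%:E).
Hypothesis G_le_xi1 : forall th z, Theta th -> `|G th z| <= xi1 z.
Hypothesis xi1_integrable : (distribution P Z).-integrable setT (EFin \o xi1).
Hypothesis conj_G_integral : forall th, Theta th -> forall c : R, 0 < c ->
  (\int[P]_w conj_fun Phi (c * `|G th (Z w)|) < +oo)%E.
Hypothesis conj_G_le_xi2 :
  forall th z, Theta th -> (`|conj_fun Phi (G th z)| <= (xi2 z)%:E)%E.
Hypothesis xi2_integrable : (distribution P Z).-integrable setT (EFin \o xi2).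

Let f := fobj P Phi G Z.
Let D := Theta `*` [set: R].
Let Exi1 := fine (\int[P]_w (xi1 (Z w))%:E)%E.
Let Exi2 := fine (\int[P]_w (xi2 (Z w))%:E)%E.
Let xl := - fine (Phi 0) - 1 - Exi2.
Let xu := (fine (Phi x0) + 1 + x0 + Exi2 + x0 * Exi1) / (x0 - 1).
Let c0 := fine (Phi 0).
Let c1 := fine (Phi x0).
Let conjPhi := conjr Phi.

Let x0_gt0 : 0 < x0. Proof. exact: lt_trans ltr01 x0_gt1. Qed.

Let c0_ge0 : 0 <= c0. Proof. exact/fine_ge0/Phi_ge0. Qed.

Let c1_ge0 : 0 <= c1. Proof. exact/fine_ge0/Phi_ge0/ltW. Qed.

Let conjPhiE y : (conjPhi y)%:E = conj_fun Phi y.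
Proof. exact: (@conjrE _ Phi Phi_ge0 Phi0_fin Phi_superlinear). Qed.

Let conjPhi_ge_slope0 y : - c0 <= conjPhi y.
Proof.
have := @conjr_ge _ Phi Phi_ge0 Phi0_fin Phi_superlinear 0 y (lexx 0) Phi0_fin.
by rewrite mul0r sub0r.
Qed.

Let conjPhi_ge_slope_x0 y : x0 * y - c1 <= conjPhi y.
Proof. exact: (@conjr_ge _ Phi Phi_ge0 Phi0_fin Phi_superlinear x0 y (ltW x0_gt0) Phix0_fin). Qed.

Definition loss (p : 'rV[R]_m * R) (w : Omega) : R := conjPhi (G p.1 (Z w) + p.2) - p.2.

(* (A1): the section theta = th of G, composed with Z, is measurable; the
   domain Theta x R^d of G is measurable since Theta is compact, hence closed. *)
Lemma measurable_G_Z th : Theta th -> measurable_fun setT (fun w => G th (Z w)).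
Proof.
move=> Tth; have Theta_closed : closed Theta := compact_closed (@norm_hausdorff _ _) Theta_compact.
have mTheta : measurable (Theta : set (borelRV R m)).
  rewrite -(setCK Theta); apply: measurableC; apply: sub_sigma_algebra.
  exact: closed_openC.
have -> : (fun w => G th (Z w)) = (fun p : borelRV R m * borelRV R d => G p.1 p.2)
    \o (fun w => ((th : borelRV R m), Z w)) by [].
apply: (measurable_comp _ _ G_measurable).
- exact: measurableX.
- by move=> _ [w _ <-]; split.
- by apply: measurable_fun_pair => //; exact: measurable_funPT.
Qed.

Lemma integrable_comp_Z {xi : 'rV[R]_d -> R} :
  (distribution P Z).-integrable setT (EFin \o xi) ->
  P.-integrable setT (EFin \o (fun w => xi (Z w))).
Proof.
move=> /integrableP [mxi ixi]; apply/integrableP; split.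
  exact: measurableT_comp mxi (measurable_funPT Z).
have := @ge0_integral_pushforward _ _ _ _ _ _ (measurable_funPT Z) P setT
  (fun y => `|(EFin \o xi) y|)%E measurableT (measurableT_comp _ mxi)
  (fun y _ => abse_ge0 _).
by rewrite preimage_setT => E; move: ixi; rewrite /distribution E.
Qed.

Lemma integral_xi_comp_Z {xi : 'rV[R]_d -> R} :
  (distribution P Z).-integrable setT (EFin \o xi) ->
  (\int[P]_w (xi (Z w))%:E)%E = (fine (\int[P]_w (xi (Z w))%:E))%:E.
Proof. by move=> /integrable_comp_Z/integrable_fin_num/fineK ->. Qed.

Let measurable_conjPhi : measurable_fun setT conjPhi.
Proof. exact: (@measurable_conjr _ Phi Phi_ge0 Phi0_fin Phi_superlinear). Qed.

Lemma integrable_conj_scaled_G {th} c : Theta th -> 0 < c ->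
  P.-integrable setT (EFin \o (fun w => conjPhi (c * `|G th (Z w)|))).
Proof.
move=> Tth c_gt0; apply: (integrable_bounded_below P _ c0) => //.
- apply: measurableT_comp measurable_conjPhi _; apply: measurable_funM => //.
  exact/measurableT_comp/measurable_G_Z.
- by under eq_integral do rewrite conjPhiE; exact: conj_G_integral.
Qed.

(* The loss is integrable: Phi^*(G + x) lies between -Phi(0) and
   Phi^*(2|G|) + Phi^*(2|x|) + Phi(0). *)
Lemma integrable_loss p : Theta p.1 -> P.-integrable setT (EFin \o loss p).
Proof.
move=> Tp; set k := `|conjPhi (2 * `|p.2|)| + 2 * c0 + `|p.2|.
have iG := integrable_conj_scaled_G 2 Tp (ltr0Sn _ 1).
apply: le_integrable (integrable_addr_cst P _ k iG) => //.
  apply/measurable_EFinP/measurable_funB => //; apply: measurableT_comp measurable_conjPhi _.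
  by apply: measurable_funD => //; exact: measurable_G_Z.
move=> w _ /=; rewrite lee_fin /loss.
have := @conjr_add_le _ Phi Phi_ge0 Phi0_fin Phi_superlinear (G p.1 (Z w)) p.2.
have := conjPhi_ge_slope0 (G p.1 (Z w) + p.2).
have := conjPhi_ge_slope0 (2 * `|G p.1 (Z w)|).
have := normr_ge0 (conjPhi (2 * `|p.2|)); have := ler_norm (conjPhi (2 * `|p.2|)).
have := ler_norm p.2; have := ler_norm (- p.2).
rewrite normrN -/c0 -/conjPhi => *; have := c0_ge0 => ?.
rewrite [X in _ <= X]ger0_norm /k; last lra.
by rewrite ler_norml; apply/andP; split; lra.
Qed.

Lemma fobj_loss p : Theta p.1 -> f p = (\int[P]_w (loss p w)%:E)%E.
Proof. by move=> _; apply: eq_integral => w _; rewrite /loss EFinB conjPhiE. Qed.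

Lemma fobj_fin_num p : D p -> f p \is a fin_num.
Proof. by move=> [Tp _]; rewrite fobj_loss //; exact/integrable_fin_num/integrable_loss. Qed.

Lemma fobj_ge p (k : R) : Theta p.1 -> (forall w, k <= loss p w) -> (k%:E <= f p)%E.
Proof.
move=> Tp kle; rewrite fobj_loss // -(integral_cst_prob P).
apply: le_integral => //; last by move=> w _; rewrite lee_fin.
- exact: finite_measure_integrable_cst.
- exact: integrable_loss.
Qed.

Lemma fobj_ge_slope0 {p} : Theta p.1 -> ((- c0 - p.2)%:E <= f p)%E.
Proof. by move=> Tp; apply: fobj_ge => // w; rewrite /loss lerD2r. Qed.

Lemma fobj_ge_slope_x0 {p} : Theta p.1 -> (((x0 - 1) * p.2 - c1 - x0 * Exi1)%:E <= f p)%E.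
Proof.
move=> Tp; have ixi := integrable_comp_Z xi1_integrable.
have iZ : P.-integrable setT (EFin \o (fun w => - x0 * xi1 (Z w))).
  by apply: (eq_integrable _ (fun w => (- x0)%:E * (xi1 (Z w))%:E)%E) => //; exact: integrableZl.
have -> : ((x0 - 1) * p.2 - c1 - x0 * Exi1)%:E =
    (\int[P]_w (- x0 * xi1 (Z w) + ((x0 - 1) * p.2 - c1))%:E)%E.
  rewrite integral_addr_cst // (eq_integral (fun w => (- x0)%:E * (xi1 (Z w))%:E)%E).
    by rewrite integralZl // integral_xi_comp_Z // -EFinM -EFinD mulNr addrC.
  by move=> w _; rewrite EFinM.
rewrite fobj_loss //; apply: le_integral => //.
- exact: integrable_addr_cst.
- exact: integrable_loss.
move=> w _; rewrite lee_fin /loss; have := conjPhi_ge_slope_x0 (G p.1 (Z w) + p.2).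
rewrite mulrDr; move: (G_le_xi1 _ (Z w) Tp); rewrite ler_norml => /andP[Gxi _].
by have := ler_wpM2l (ltW x0_gt0) Gxi; rewrite mulrN mulNr; lra.
Qed.

(* At x = 0, |Phi^*(G)| <= xi2 gives f(th, 0) <= E[xi2(Z)]. *)
Lemma fobj_at0_le {th} : Theta th -> (f (th, 0%R) <= Exi2%:E)%E.
Proof.
move=> Tth; rewrite fobj_loss // /Exi2 -integral_xi_comp_Z //.
apply: le_integral => //; first exact: (integrable_loss (th, 0%R)).
  exact: integrable_comp_Z.
move=> w _; rewrite /loss /= addr0 subr0 conjPhiE.
exact: le_trans (lee_abs _) (conj_G_le_xi2 _ (Z w) Tth).
Qed.

(* E[xi1(Z)] and E[xi2(Z)] are nonnegative, as xi1 >= |G| and xi2 >= |Phi^* o G|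
   on the nonempty Theta. *)
Let Exi1_ge0 : 0 <= Exi1.
Proof.
have [th Tth] := Theta_neq0; apply/fine_ge0/integral_ge0 => w _.
by rewrite lee_fin; apply: le_trans (G_le_xi1 _ (Z w) Tth).
Qed.

Let Exi2_ge0 : 0 <= Exi2.
Proof.
have [th Tth] := Theta_neq0; apply/fine_ge0/integral_ge0 => w _.
exact: le_trans (conj_G_le_xi2 _ (Z w) Tth).
Qed.

Lemma band_contains0 : xl <= 0 <= xu.
Proof.
have := c0_ge0; have := c1_ge0; have := Exi2_ge0; have := mulr_ge0 (ltW x0_gt0) Exi1_ge0.
move=> ? ? ? ?; have xl_le0 : - c0 - 1 - Exi2 <= 0 by lra.
have xu_ge0 : 0 <= (c1 + 1 + x0 + Exi2 + x0 * Exi1) / (x0 - 1).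
  by apply: divr_ge0; have := x0_gt1; lra.
by apply/andP; split; [exact: xl_le0 | exact: xu_ge0].
Qed.

(* Outside the band [xl, xu], f exceeds E[xi2(Z)]: below xl by the slope-0
   bound, above xu by the slope-x0 bound since x0 > 1. *)
Lemma fobj_outside_band {p} : Theta p.1 -> ~ (xl <= p.2 <= xu) -> (Exi2%:E < f p)%E.
Proof.
move=> Tp /negP; rewrite negb_and -!ltNge => /orP[xlt|xut].
  by apply: lt_le_trans (fobj_ge_slope0 Tp); rewrite lte_fin; move: xlt; rewrite /xl -/c0; lra.
apply: lt_le_trans (fobj_ge_slope_x0 Tp); rewrite lte_fin.
have : (x0 - 1) * xu < (x0 - 1) * p.2 by rewrite ltr_pM2l // subr_gt0.
by rewrite /xu mulrC divfK ?subr_eq0 ?gt_eqF // -/c1; have := x0_gt0; lra.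
Qed.

Let snd_continuous (q : 'rV[R]_m * R) : {for q, continuous snd}.
Proof. exact: cvg_snd. Qed.

(* For fixed w, q |-> loss q w = Phi^*(G(q.1, Z w) + q.2) - q.2 is lower
   semicontinuous: G is lsc in theta, Phi^* preserves lsc, q.2 is continuous. *)
Lemma lsc_loss w : lsc_on D (fun q => (loss q w)%:E).
Proof.
have lsc_arg : lsc_on D (EFin \o (fun q : 'rV[R]_m * R => G q.1 (Z w) + q.2)).
  apply: (@lsc_onD _ _ D (fun q => G q.1 (Z w))); first exact: lsc_on_fst (G_lsc (Z w)).
  by apply: lsc_on_continuous => q _; exact: snd_continuous.
have lsc_conj : lsc_on D (EFin \o (fun q : 'rV[R]_m * R => conjPhi (G q.1 (Z w) + q.2))).
  by apply: eq_lsc_on (lsc_on_conj_fun Phi lsc_arg) => q _; rewrite /= conjPhiE.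
apply: lsc_onD lsc_conj _; apply: lsc_on_continuous => q _.
exact: cvgN (snd_continuous q).
Qed.

(* Parametric Fatou: the loss is integrable, lsc in q, and bounded below by
   -Phi(0) - q.2 >= -Phi(0) - p.2 - 1 near p. *)
Lemma lsc_fobj : lsc_on D f.
Proof.
apply: eq_lsc_on (lsc_on_integral P D loss _ _ lsc_loss) => [q [Tq _]|q [Tq _]|p _].
- by rewrite fobj_loss.
- exact: integrable_loss.
exists (c0 + p.2 + 1); rewrite near_withinE.
have : \forall q \near p, q.2 < p.2 + 1 by apply: (cvgr_lt _ (snd_continuous p)); lra.
apply: filterS => q qp _ w; rewrite /loss.
by have := conjPhi_ge_slope0 (G q.1 (Z w) + q.2); lra.
Qed.

Let K := Theta `*` `[xl, xu].

Let K_sub_D : K `<=` D. Proof. by move=> q [Tq _]. Qed.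

Let K_compact : compact K.
Proof. by apply: compact_setX; [exact: Theta_compact | exact: segment_compact]. Qed.

Let K_at0 {th} : Theta th -> K (th, 0%R).
Proof. by move=> Tth; split => //=; rewrite in_itv band_contains0. Qed.

(* f attains its minimum over the band: it is lsc, and its infimum there lies
   between -Phi(0) - xu and f(th, 0). *)
Lemma fobj_argmin_band : exists2 p, K p & forall q, K q -> (f p <= f q)%E.
Proof.
apply: lsc_compact_argmin K_compact (lsc_on_subset K_sub_D lsc_fobj) _.
have [th Tth] := Theta_neq0; rewrite fin_numElt; apply/andP; split.
  apply: lt_le_trans (ltNyr (- c0 - xu)) _; apply/ereal_infP => _ [q [Tq qb] <-].
  move: qb; rewrite /= in_itv /= => /andP[_ qxu]; apply: le_trans (fobj_ge_slope0 Tq).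
  by rewrite lee_fin lerD2l lerN2.
apply: (@le_lt_trans _ _ (f (th, 0%R))); first by apply: ereal_inf_lbound; exists (th, 0%R) => //; exact: K_at0.
by have := fobj_fin_num (th, 0%R) (K_sub_D _ (K_at0 Tth)); rewrite fin_numElt => /andP[].
Qed.

(* Every minimizer lies in the band, since f > E[xi2(Z)] >= f(th, 0) outside. *)
Lemma minimizers_in_band : minimizers D f `<=` K.
Proof.
move=> q [[Tq _] qmin]; split => //=; rewrite in_itv /=; apply: contrapT => nq.
have [th Tth] := Theta_neq0; have := qmin _ (K_sub_D _ (K_at0 Tth)).
by rewrite leNgt (le_lt_trans (fobj_at0_le Tth) (fobj_outside_band Tq nq)).
Qed.

(* A minimizer over the band is a global minimizer over D. *)
Lemma minimizers_neq0 : minimizers D f !=set0.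
Proof.
have [p Kp pmin] := fobj_argmin_band; exists p; split; first exact: K_sub_D.
move=> q [Tq _]; have [Kq|nKq] := pselect (K q); first exact: pmin.
have [th Tth] := Theta_neq0; apply: le_trans (pmin _ (K_at0 Tth)) _.
apply/ltW/(le_lt_trans (fobj_at0_le Tth))/fobj_outside_band => // qb.
by apply: nKq; split; rewrite /= ?in_itv.
Qed.

(* The minimizers form the closed sublevel set {q in K | f q <= min f} of the
   compact band. *)
Lemma minimizers_compact : compact (minimizers D f).
Proof.
have [p [Dp pmin]] := minimizers_neq0; have fpE := fineK (fobj_fin_num p Dp).
have -> : minimizers D f = [set q | K q /\ (f q <= (fine (f p))%:E)%E].
  apply/seteqP; split => q.
  - by move=> qm; split; [exact: minimizers_in_band | rewrite fpE; exact: qm.2].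
  - move=> [Kq fq]; split => [|r Dr]; first exact: K_sub_D.
    by apply: le_trans (pmin r Dr); rewrite -fpE.
apply: subclosed_compact K_compact _ => [|q []//].
apply: lsc_sublevel_closed (lsc_on_subset K_sub_D lsc_fobj).
exact: compact_closed (@norm_hausdorff _ _) K_compact.
Qed.

End Objective.

Theorem lemma7p3 (R : realType) (m d : nat) (Theta : set 'rV[R]_m)
  (dO : measure_display) (Omega : measurableType dO)
  (P : probability Omega R) (Z : {mfun Omega >-> borelRV R d})
  (G : 'rV[R]_m -> 'rV[R]_d -> R) (Phi : R -> \bar R)
  (xi1 xi2 : 'rV[R]_d -> R) (x0 : R) :
  (* Theta nonempty compact *)
  Theta !=set0 -> compact Theta ->
  (* standing assumptions on Phi : [0,oo[ -> [0,oo] *)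
  (forall x : R, 0 <= x -> (0 <= Phi x)%E) ->
  lsc_on (`[0, +oo[ : set R) Phi ->
  convex_on_nonneg Phi ->
  (Phi 0%R < +oo)%E ->
  ereal_inf (Phi @` (`[0, +oo[ : set R)) = 0%E ->
  ((fun x : R => Phi x * (x^-1)%R%:E)%E @ +oo --> +oo%E) ->
  (* x0 > 1 with Phi(x0) < oo *)
  1 < x0 -> (Phi x0 < +oo)%E ->
  (* (A1) *)
  measurable_fun (Theta `*` setT : set (borelRV R m * borelRV R d))
    (fun p : borelRV R m * borelRV R d => G p.1 p.2) ->
  (forall z, lsc_on Theta (fun th => (G th z)%:E)) ->
  (* (A2) *)
  (forall th z, Theta th -> `|G th z| <= xi1 z) ->
  (distribution P Z).-integrable setT (EFin \o xi1) ->
  (* (A3) *)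
  (forall th, Theta th -> forall c : R, 0 < c ->
     (\int[P]_w conj_fun Phi (c * `|G th (Z w)|) < +oo)%E) ->
  (forall th z, Theta th -> (`|conj_fun Phi (G th z)| <= (xi2 z)%:E)%E) ->
  (distribution P Z).-integrable setT (EFin \o xi2) ->
  let f := fobj P Phi G Z in
  let D := Theta `*` [set: R] in
  let Exi1 := fine (\int[P]_w (xi1 (Z w))%:E)%E in
  let Exi2 := fine (\int[P]_w (xi2 (Z w))%:E)%E in
  let xl := - fine (Phi 0) - 1 - Exi2 in
  let xu := (fine (Phi x0) + 1 + x0 + Exi2 + x0 * Exi1) / (x0 - 1) in
  [/\ (forall p, D p -> f p \is a fin_num),
      lsc_on D f,
      minimizers D f !=set0,
      compact (minimizers D f) &
      minimizers D f `<=` Theta `*` `[xl, xu]].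
Proof.
move=> Theta_neq0 Theta_compact Phi_ge0 _ _ Phi0_fin _ Phi_superlinear x0_gt1 Phix0_fin
  G_measurable G_lsc G_le_xi1 xi1_integrable conj_G_integral conj_G_le_xi2
  xi2_integrable f D Exi1 Exi2 xl xu.
split; [ apply: fobj_fin_num | apply: lsc_fobj | apply: minimizers_neq0
       | apply: minimizers_compact | apply: minimizers_in_band ]; eassumption.
Qed.
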